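(* Let $G$ be a connected $m$-uniform hypergraph on $n$ vertices. Suppose its incidence matrix $B_G$ has Smith normal form over $\mathbb{Z}_m$ with nonzero diagonal entries $d_1,\dots,d_r$. Then $|\mathbb{PV}_0(\mathcal{L}(G))|=s(\mathcal{L}(G))=s(\mathcal{A}(G))=m^{n-1-r}\prod_{i=1}^r d_i$.
   Context: An $m$-uniform hypergraph $G$ on vertices $v_1,\dots,v_n$ has edges that are $m$-subsets; it is connected in the usual sense. Adjacency tensor $\mathcal{A}(G)$: order $m$, dimension $n$, entry $\frac1{(m-1)!}$ at $(i_1,\dots,i_m)$ if $\{v_{i_1},\dots,v_{i_m}\}$ is an edge, $0$ otherwise. $\mathcal{L}(G)=\mathcal{D}(G)-\mathcal{A}(G)$, where $\mathcal{D}(G)$ is diagonal with the vertex degrees. Incidence matrix $B_G$: rows indexed by edges, columns by vertices, $b_{e,v}=1$ if $v\in e$, else $0$. Smith normal form over $\mathbb{Z}_m$: invertible $P,Q$ over $\mathbb{Z}_m$ with $PB_GQ$ diagonal with entries $d_1,\dots,d_r,0,\dots,0$, $1\le d_i\le m-1$, $d_i\mid d_{i+1}$, $d_i\mid m$. For a tensor $\mathcal{T}$, $(\mathcal{T}x^{m-1})_i=\sum_{i_2,\dots,i_m}t_{ii_2\cdots i_m}x_{i_2}\cdots x_{i_m}$ and $\mathbb{PV}_\lambda(\mathcal{T})=\{x\in\mathbb{P}^{n-1}:\mathcal{T}x^{m-1}=\lambda x^{[m-1]}\}$ with $x^{[m-1]}=(x_i^{m-1})$. Stabilizing index: $s(\mathcal{T})=|\{D=\mathrm{diag}(d_1,\dots,d_n)\text{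 invertible complex}:\mathcal{T}=D^{-(m-1)}\mathcal{T}D,\ d_1=1\}|$, where $D^{-(m-1)}\mathcal{T}D$ has entries $d_{i_1}^{-(m-1)}t_{i_1\cdots i_m}d_{i_2}\cdots d_{i_m}$. *)

From HB Require Import structures.
From mathcomp Require Import all_boot all_order all_algebra.
From mathcomp Require Import complex.
From mathcomp Require Import reals.
Set Implicit Arguments. Unset Strict Implicit. Unset Printing Implicit Defensive.
Import Order.TTheory GRing.Theory Num.Theory.
Local Open Scope ring_scope.

Definition uniform (n m : nat) (E : {set {set 'I_n}}) : Prop :=
  forall e, e \in E -> #|e| = m.

Definition hadj (n : nat) (E : {set {set 'I_n}}) : rel 'I_n :=
  fun u v => [exists e in E, (u \in e) && (v \in e)].

Definition hconnected (n : nat) (E : {set {set 'I_n}}) : Prop :=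
  forall u v : 'I_n, connect (hadj E) u v.

Definition hdeg (n : nat) (E : {set {set 'I_n}}) (i : 'I_n) : nat :=
  #|[set e in E | i \in e]|.

(* A tensor of order m and dimension n over C: the entry t_{i i_2 ... i_m}
   is T i f where f : 'I_(m-1) -> 'I_n lists (i_2, ..., i_m). *)
Definition tensor (C : Type) (m n : nat) := 'I_n -> {ffun 'I_m.-1 -> 'I_n} -> C.

Definition idxset (n m : nat) (i : 'I_n) (f : {ffun 'I_m.-1 -> 'I_n}) : {set 'I_n} :=
  i |: [set f j | j : 'I_m.-1].

Definition adjT (C : numClosedFieldType) (n m : nat) (E : {set {set 'I_n}})
  : tensor C m n :=
  fun i f => if idxset i f \in E then ((m.-1)`!%:R)^-1 else 0.

Definition degT (C : numClosedFieldType) (n m : nat) (E : {set {set 'I_n}})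
  : tensor C m n :=
  fun i f => if [forall j, f j == i] then (hdeg E i)%:R else 0.

Definition lapT (C : numClosedFieldType) (n m : nat) (E : {set {set 'I_n}})
  : tensor C m n :=
  fun i f => @degT C n m E i f - @adjT C n m E i f.

Definition tapp (C : numClosedFieldType) (m n : nat) (T : tensor C m n)
  (x : 'I_n -> C) (i : 'I_n) : C :=
  \sum_(f : {ffun 'I_m.-1 -> 'I_n}) T i f * \prod_(j < m.-1) x (f j).

(* nonzero vectors x with T x^{m-1} = lam x^{[m-1]} (affine cone over PV_lam) *)
Definition eigcone (C : numClosedFieldType) (m n : nat) (T : tensor C m n)
  (lam : C) (x : 'I_n -> C) : Prop :=
  (exists i, x i != 0) /\ forall i, tapp T x i = lam * x i ^+ m.-1.

Definition proportional (C : numClosedFieldType) (n : nat) (x y : 'I_n -> C) : Prop :=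
  exists c : C, c != 0 /\ forall i, x i = c * y i.

(* The set of projective points {[x] : V x} has exactly N elements
   (V is a cone of nonzero vectors closed under nonzero scaling). *)
Definition proj_card (C : numClosedFieldType) (n : nat) (V : ('I_n -> C) -> Prop)
  (N : nat) : Prop :=
  exists X : 'I_N -> 'I_n -> C,
    (forall k, V (X k)) /\
    (forall k l, proportional (X k) (X l) -> k = l) /\
    (forall x, V x -> exists k, proportional x (X k)).

Definition set_card (C : Type) (n : nat) (P : ('I_n -> C) -> Prop) (N : nat) : Prop :=
  exists X : 'I_N -> 'I_n -> C,
    injective X /\ (forall k, P (X k)) /\ (forall d, P d -> exists k, d = X k).

(* D = diag(d) invertible with d_1 = 1 and T = D^{-(m-1)} T D *)
Definition stabilizes (C : numClosedFieldType) (m n : nat) (T : tensor C m n)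
  (d : 'I_n -> C) : Prop :=
  (forall i, d i != 0) /\ (forall i : 'I_n, val i = 0%N -> d i = 1) /\
  forall i f, T i f = (d i ^+ m.-1)^-1 * T i f * \prod_(j < m.-1) d (f j).

Definition stab_index_is (C : numClosedFieldType) (m n : nat) (T : tensor C m n)
  (N : nat) : Prop := set_card (stabilizes T) N.

Definition incidence (n m : nat) (E : {set {set 'I_n}}) : 'M['Z_m]_(#|E|, n) :=
  \matrix_(k < #|E|, v < n) (v \in (enum_val k : {set 'I_n}) : nat)%:R.

Definition smith_form_Zm (m p q : nat) (B : 'M['Z_m]_(p, q)) (ds : seq nat) : Prop :=
  (size ds <= minn p q)%N /\
  all (fun d => (1 <= d <= m.-1)%N) ds /\
  sorted dvdn ds /\
  all (fun d => d %| m)%N ds /\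
  exists (P : 'M['Z_m]_p) (Q : 'M['Z_m]_q),
    P \in unitmx /\ Q \in unitmx /\
    forall (i : 'I_p) (j : 'I_q),
      (P *m B *m Q) i j =
        if (val i == val j) && (val i < size ds)%N then (nth 0%N ds i)%:R else 0.

From HB Require Import structures.
From mathcomp Require Import all_boot all_order all_algebra.
From mathcomp Require Import complex reals.
From mathcomp Require Import separable cyclic cyclotomic ring.
From Stdlib Require Import FunctionalExtensionality.
Set Implicit Arguments. Unset Strict Implicit. Unset Printing Implicit Defensive.
Import Order.TTheory GRing.Theory Num.Theory.
Local Open Scope ring_scope.

(* A diagonal d with d_1 = 1 stabilizes A(G) iff it is balanced: for every
   edge e and i in e, the product of d over e minus i is d_i^(m-1).  The
   degree part of L(G) sits where the scaling factor is 1, so L(G) has the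
   same stabilizers.  For balanced d, d_v^m is the product of d over any edge
   through v, hence constant along edges and equal to 1 by connectivity;
   writing d_v = w^(y_v) for a primitive m-th root of unity w identifies the
   stabilizers with the solutions of B_G y = 0 over Z_m with y_1 = 0.  The
   Smith form counts that kernel as m^(n-r) * prod d_i; it contains the
   constant vectors, whence r < n and the count m^(n-1-r) * prod d_i.
   Finally, if L(G) x^(m-1) = 0, then at a vertex of maximal modulus every
   edge term equals x_i^(m-1) (equality in the triangle inequality), so the
   maximal modulus spreads along edges; thus x is balanced and x / x_1 is a
   stabilizer, which matches eigenvectors up to scaling with stabilizers. *)

Lemma prim_root_exists (F : closedFieldType) (n : nat) :
  (0 < n)%N -> n%:R != 0 :> F -> exists z : F, n.-primitive_root z.
Proof.
move=> n_gt0 nF0; pose p : {poly F} := 'X^n - 1.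
have [r Dp] := closed_field_poly_normal p.
rewrite (monicP _) ?monicXnsubC // scale1r in Dp.
have rn1 : all n.-unity_root r by apply/allP => z; rewrite -root_prod_XsubC -Dp.
have sz_r : (n < (size r).+1)%N.
  by rewrite -(size_prod_XsubC r id) -Dp size_XnsubC.
have [|z _] := hasP (has_prim_root n_gt0 rn1 _ sz_r); last by exists z.
by rewrite -separable_prod_XsubC -Dp separable_Xn_sub_1.
Qed.

Section IndexSets.

Variables (n k : nat) (i : 'I_n) (e : {set 'I_n}).
Hypothesis card_e : #|e| = k.+1.

Lemma idxset_eq_inj (f : {ffun 'I_k -> 'I_n}) :
  idxset (m := k.+1) i f = e -> injective f /\ [set f j | j : 'I_k] = e :\ i.
Proof.
move=> fe; set F := [set f j | j : 'I_k].
have F_le : (#|F| <= k)%N by rewrite -[k in (_ <= k)%N]card_ord leq_imset_card.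
have [iF card_F] : i \notin F /\ #|F| = k.
  move: card_e F_le; rewrite -fe /idxset cardsU1 -/F.
  by case: (i \notin F) => /=; [rewrite add1n => -[->] | rewrite add0n => ->; rewrite ltnn].
have /imset_injP f_inj : #|F| == #|'I_k| by rewrite card_F card_ord.
split=> [x y /f_inj | ]; first by apply; rewrite ?inE.
by rewrite -fe /idxset setU1K.
Qed.

Lemma card_idxset_eq : i \in e ->
  #|[set f : {ffun 'I_k -> 'I_n} | idxset (m := k.+1) i f == e]| = k`!.
Proof.
move=> ie; have card_ei : #|e :\ i| = k.
  by move: card_e; rewrite (cardsD1 i e) ie => -[].
have -> : k`! = #|e :\ i| ^_ #|'I_k| by rewrite card_ei card_ord ffactnn.
rewrite -card_inj_ffuns_on; apply: eq_card => f; rewrite !inE.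
apply/eqP/andP => [/idxset_eq_inj [f_inj im] | [/ffun_onP f_on /injectiveP f_inj]].
  by split; [apply/ffun_onP => j; rewrite -im imset_f | apply/injectiveP].
have im : [set f j | j : 'I_k] = e :\ i.
  apply/eqP; rewrite eqEcard card_imset // card_ord card_ei leqnn andbT.
  by apply/subsetP => _ /imsetP [j _ ->]; apply: f_on.
by rewrite /idxset im setD1K.
Qed.

Lemma idxset_surj : i \in e -> exists f, idxset (m := k.+1) i f = e.
Proof.
move=> ie; have : (0 < #|[set f | idxset (m := k.+1) i f == e]|)%N.
  by rewrite card_idxset_eq ?fact_gt0.
by case/card_gt0P => f; rewrite inE => /eqP; exists f.
Qed.

Lemma big_idxset (R : Type) (idx : R) (op : Monoid.com_law idx)
    (f : {ffun 'I_k -> 'I_n}) (F : 'I_n -> R) :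
  idxset (m := k.+1) i f = e ->
  \big[op/idx]_(j < k) F (f j) = \big[op/idx]_(v in e :\ i) F v.
Proof.
by case/idxset_eq_inj => f_inj <-; rewrite big_imset //= => x y _ _ /f_inj.
Qed.

End IndexSets.

Lemma card_idxset_in (n k : nat) (E : {set {set 'I_n}}) (i : 'I_n) :
  uniform k.+1 E ->
  #|[set f : {ffun 'I_k -> 'I_n} | idxset (m := k.+1) i f \in E]| = (hdeg E i * k`!)%N.
Proof.
move=> uE; rewrite -sum1_card (partition_big (idxset (m := k.+1) i) [pred e in E | i \in e]).
  rewrite /hdeg -sum1_card big_distrl /=; apply: eq_big => [e | e /andP [eE ie]].
    by rewrite !inE.
  rewrite mul1n -(card_idxset_eq (uE e eE) ie) -sum1_card.
  by apply: eq_bigl => f; rewrite !inE andb_idl // => /eqP ->.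
by move=> f; rewrite !inE /= => ->; rewrite eqxx.
Qed.

Definition balanced (R : comPzRingType) (n k : nat) (E : {set {set 'I_n}})
    (x : 'I_n -> R) : Prop :=
  forall i (f : {ffun 'I_k -> 'I_n}), idxset (m := k.+1) i f \in E ->
    \prod_(j < k) x (f j) = x i ^+ k.

Lemma balanced_edge_prod (R : comPzRingType) (n k : nat) (E : {set {set 'I_n}})
    (x : 'I_n -> R) (e : {set 'I_n}) (u : 'I_n) :
  uniform k.+1 E -> balanced k E x -> e \in E -> u \in e ->
  \prod_(v in e) x v = x u ^+ k.+1.
Proof.
move=> uE bx eE ue; have [f fe] := idxset_surj (uE e eE) ue.
rewrite (bigD1 u) //= exprS -(bx u f) ?fe // (big_idxset (uE e eE) _ _ fe).
by congr (_ * _); apply: eq_bigl => v; rewrite !inE andbC.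
Qed.

Lemma balanced_scale (R : comPzRingType) (n k : nat) (E : {set {set 'I_n}})
    (x : 'I_n -> R) (c : R) :
  balanced k E x -> balanced k E (fun i => c * x i).
Proof.
by move=> bx i f fE; rewrite big_split /= prodr_const card_ord (bx i f fE) exprMn.
Qed.

Lemma eq_scaled_entry (F : fieldType) (t a c : F) :
  a != 0 -> t = a^-1 * t * c <-> t = 0 \/ c = a.
Proof.
move=> a0; split=> [t_eq | [-> | ->]]; last 2 first.
- by rewrite mulr0 mul0r.
- by rewrite mulrAC mulVf ?mul1r.
have [-> | t0] := eqVneq t 0; [by left | right].
move/eqP: t_eq; rewrite mulrAC -subr_eq0 -{1}[t]mul1r -mulrBl mulf_eq0 (negPf t0).
by rewrite orbF subr_eq0 => /eqP h; rewrite -(mulVKf a0 c) -h mulr1.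
Qed.

Lemma prod_eq_bound (R : numDomainType) (I : finType) (a : I -> R) (M : R) :
  0 < M -> (forall j, 0 <= a j <= M) -> \prod_j a j = M ^+ #|I| ->
  forall t, a t = M.
Proof.
move=> M_gt0 aM prod_aM t; have /andP [at0 atM] := aM t.
have [// | atM'] := eqVneq (a t) M; have at_lt : a t < M by rewrite lt_neqAle atM'.
suff : \prod_j a j < M ^+ #|I| by rewrite prod_aM ltxx.
rewrite -prodr_const (bigD1 t) //= [X in _ < X](bigD1 t) //=.
apply: (le_lt_trans (y := a t * \prod_(j | j != t) M)).
  by rewrite ler_wpM2l // ler_prod // => j _; apply: aM.
by rewrite ltr_pM2r // prodr_gt0.
Qed.

Section Tensors.

Variables (C : numClosedFieldType) (n k : nat) (E : {set {set 'I_n}}).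
Hypothesis uE : uniform k.+1 E.

Local Notation adj := (@adjT C n k.+1 E).
Local Notation lap := (@lapT C n k.+1 E).

Lemma adjT_eq0 i f : (adj i f == 0) = (idxset i f \notin E).
Proof.
by rewrite /adjT; case: ifP => _; rewrite ?eqxx // invr_eq0 pnatr_eq0 gtn_eqF ?fact_gt0.
Qed.

Lemma degT_const i f : @degT C n k.+1 E i f = if f == [ffun => i] then (hdeg E i)%:R else 0.
Proof.
rewrite /degT; congr (if _ then _ else _).
apply/forallP/eqP => [f_i | -> j]; last by rewrite ffunE.
by apply/ffunP => j; rewrite ffunE; apply/eqP.
Qed.

Lemma stabilizes_adjT d :
  stabilizes adj d <->
  [/\ forall i, d i != 0, forall i : 'I_n, val i = 0%N -> d i = 1 & balanced k E d].
Proof.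
split=> [[d0 [d1 d_adj]] | [d0 d1 bd]]; split=> //.
  move=> i f iE; have /(eq_scaled_entry _ _ (expf_neq0 k (d0 i))) [/eqP | //] := d_adj i f.
  by rewrite adjT_eq0 iE.
split=> // i f; apply/(eq_scaled_entry _ _ (expf_neq0 k (d0 i))).
have [/bd -> | iE] := boolP (idxset i f \in E); [by right | left].
by apply/eqP; rewrite adjT_eq0.
Qed.

Lemma stabilizes_lapT d : stabilizes lap d <-> stabilizes adj d.
Proof.
have entry i f : d i != 0 ->
    lap i f = (d i ^+ k)^-1 * lap i f * \prod_(j < k) d (f j) <->
    adj i f = (d i ^+ k)^-1 * adj i f * \prod_(j < k) d (f j).
  (* The degree tensor is supported on [f = [ffun => i]], where the scaling
     factor is [1]. *)
  move=> di0; have [-> | fi] := eqVneq f [ffun => i]; last first.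
    rewrite /lapT degT_const (negPf fi) !sub0r mulrN mulNr.
    by split=> [/oppr_inj // | h]; rewrite {1}h.
  rewrite (eq_bigr (fun=> d i)) => [|j _]; last by rewrite ffunE.
  by rewrite prodr_const card_ord !(mulrAC _ _ (d i ^+ k)) mulVf ?expf_neq0 ?mul1r.
split=> -[d0 [d1 d_eq]]; do 2!split=> //.
  by move=> i f; apply/(entry i f (d0 i)).
by move=> i f; apply/(entry i f (d0 i)).
Qed.

Lemma tapp_lapT x i :
  tapp lap x i = (hdeg E i)%:R * x i ^+ k -
    (k`!%:R)^-1 * \sum_(f : {ffun 'I_k -> 'I_n} | idxset (m := k.+1) i f \in E)
                     \prod_(j < k) x (f j).
Proof.
rewrite /tapp /lapT; under eq_bigr do rewrite mulrBl; rewrite sumrB; congr (_ - _).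
  rewrite (bigD1 [ffun => i]) //= [X in _ + X]big1 => [|f /negPf fi]; last first.
    by rewrite degT_const fi mul0r.
  rewrite degT_const eqxx addr0 (eq_bigr (fun=> x i)) => [|j _]; last by rewrite ffunE.
  by rewrite prodr_const card_ord.
rewrite mulr_sumr [RHS]big_mkcond; apply: eq_bigr => f _ /=.
by rewrite /adjT; case: ifP; rewrite ?mul0r.
Qed.

Lemma tapp_lapT_eq0 x i :
  tapp lap x i = 0 <->
  \sum_(f : {ffun 'I_k -> 'I_n} | idxset (m := k.+1) i f \in E) \prod_(j < k) x (f j) =
  \sum_(f : {ffun 'I_k -> 'I_n} | idxset (m := k.+1) i f \in E) x i ^+ k.
Proof.
have kf0 : k`!%:R != 0 :> C by rewrite pnatr_eq0 gtn_eqF ?fact_gt0.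
have -> : tapp lap x i = (k`!%:R)^-1 *
    (\sum_(f : {ffun 'I_k -> 'I_n} | idxset (m := k.+1) i f \in E) x i ^+ k -
     \sum_(f : {ffun 'I_k -> 'I_n} | idxset (m := k.+1) i f \in E) \prod_(j < k) x (f j)).
  rewrite tapp_lapT sumr_const -cardsE card_idxset_in // mulrBr; congr (_ - _).
  by rewrite -[_ *+ (_ * _)]mulr_natr natrM; field.
split=> [/eqP | ->]; last by rewrite subrr mulr0.
by rewrite mulf_eq0 invr_eq0 (negPf kf0) subr_eq0 => /eqP.
Qed.

Lemma balanced_eigcone x (i0 : 'I_n) : x i0 != 0 -> balanced k E x -> eigcone lap 0 x.
Proof.
move=> xi0 bx; split=> [|i]; first by exists i0.
by rewrite mul0r; apply/tapp_lapT_eq0; apply: eq_bigr => f /bx.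
Qed.

Section MaxModulus.

Variables (x : 'I_n -> C) (M : C).
Hypotheses (x_ker : forall i, tapp lap x i = 0) (M_gt0 : 0 < M).
Hypothesis x_le : forall j, `|x j| <= M.

Lemma lapT_ker_balanced_at i : `|x i| = M ->
  forall f : {ffun 'I_k -> 'I_n}, idxset (m := k.+1) i f \in E ->
    \prod_(j < k) x (f j) = x i ^+ k.
Proof.
(* The terms [\prod_j x (f j) / x i ^+ k] have modulus at most 1 and sum to
   the number of terms, so they all equal 1. *)
move=> xiM; have xk0 : x i ^+ k != 0 by rewrite expf_neq0 // -normr_gt0 xiM.
have le1 (f : {ffun 'I_k -> 'I_n}) : idxset (m := k.+1) i f \in E ->
    `|\prod_(j < k) x (f j) / x i ^+ k| <= 1.
  move=> _; rewrite normrM normfV normrX xiM normr_prod ler_pdivrMr ?exprn_gt0 // mul1r.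
  rewrite -[k in M ^+ k]card_ord -prodr_const ler_prod // => j _.
  by rewrite normr_ge0 x_le.
have sum_eq :
    \sum_(f : {ffun 'I_k -> 'I_n} | idxset (m := k.+1) i f \in E) (\prod_(j < k) x (f j) / x i ^+ k)
    = \sum_(f : {ffun 'I_k -> 'I_n} | idxset (m := k.+1) i f \in E) 1.
  rewrite -mulr_suml (tapp_lapT_eq0 x i).1 // mulr_suml.
  by apply: eq_bigr => f _; rewrite mulfV.
move=> f fE; rewrite -(divfK xk0 (\prod_(j < k) x (f j))).
by rewrite (normC_sum_upper le1 sum_eq fE) mul1r.
Qed.

Lemma lapT_ker_max_adj u v : hadj E u v -> `|x u| = M -> `|x v| = M.
Proof.
case/existsP => e /and3P [eE ue ve] xuM.
have [-> // | vu] := eqVneq v u.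
have [f fe] := idxset_surj (uE eE) ue.
have : v \in [set f j | j : 'I_k] by move: ve; rewrite -fe /idxset !inE (negPf vu).
case/imsetP => t _ ->.
apply: (prod_eq_bound (a := fun j => `|x (f j)|) M_gt0) => [j|].
  by rewrite normr_ge0 x_le.
by rewrite card_ord -normr_prod (lapT_ker_balanced_at xuM) ?fe // normrX xuM.
Qed.

End MaxModulus.

Lemma hadj_sym : symmetric (hadj E).
Proof.
by move=> u v; apply/existsP/existsP => -[e /and3P [eE ue ve]]; exists e; rewrite eE ue ve.
Qed.

Lemma eigcone_lapT_balanced x :
  hconnected E -> eigcone lap 0 x -> (forall i, x i != 0) /\ balanced k E x.
Proof.
move=> hc [[j0 xj0] x_eig].
have x_ker i : tapp lap x i = 0 by rewrite x_eig mul0r.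
have [i0 _ x_max] := @real_arg_maxP _ _ j0 predT _ isT (fun i _ => normr_real (x i)).
have x_le j : `|x j| <= `|x i0| := x_max j isT.
have M_gt0 : 0 < `|x i0| by apply: lt_le_trans (x_le j0); rewrite normr_gt0.
have closedM : closed (hadj E) [pred v | `|x v| == `|x i0|].
  move=> u v huv; rewrite !inE; apply/eqP/eqP => [|xvM].
    exact: (lapT_ker_max_adj x_ker M_gt0 x_le huv).
  by apply: (lapT_ker_max_adj x_ker M_gt0 x_le _ xvM); rewrite hadj_sym.
have xM v : `|x v| = `|x i0|.
  by have := closed_connect closedM (hc i0 v); rewrite !inE eqxx => /esym/eqP.
split=> [v | i f]; first by rewrite -normr_gt0 xM.
by move=> fE; apply: (lapT_ker_balanced_at x_ker M_gt0 x_le (xM i) fE).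
Qed.

Lemma stabilizes_adjT_eigcone d (i0 : 'I_n) : val i0 = 0%N ->
  stabilizes adj d -> eigcone lap 0 d /\ d i0 = 1.
Proof.
by move=> i0_0 /stabilizes_adjT [d0 d1 bd]; split; [apply: balanced_eigcone (d0 i0) bd | apply: d1].
Qed.

Lemma eigcone_normalize x (i0 : 'I_n) : hconnected E -> val i0 = 0%N ->
  eigcone lap 0 x -> x i0 != 0 /\ stabilizes adj (fun i => (x i0)^-1 * x i).
Proof.
move=> hc i0_0 /(eigcone_lapT_balanced hc) [x0 bx]; split=> //.
apply/stabilizes_adjT; split=> [i | i i_0 | ]; last exact: balanced_scale.
  by rewrite mulf_neq0 ?invr_eq0.
by rewrite (_ : i = i0) ?mulVf //; apply: val_inj; rewrite i_0.
Qed.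

End Tensors.

Definition powvec (R : pzSemiRingType) (m n : nat) (w : R) (y : 'cV['Z_m]_n) : 'I_n -> R :=
  fun i => w ^+ y i ord0.

Lemma Zp_natr_eq0 (p N : nat) : ((N%:R : 'Z_p.+2) == 0) = (p.+2 %| N)%N.
Proof. by rewrite Zp_nat -val_eqE /= /dvdn. Qed.

Section IncidenceKernel.

Variables (p n : nat) (E : {set {set 'I_n}}).
Local Notation m := p.+2.
Local Notation B := (@incidence n m E).

Lemma incidence_mulmx_eq0 (y : 'cV['Z_m]_n) :
  (B *m y == 0) = [forall e in E, m %| \sum_(v in e) y v ord0]%N.
Proof.
have entry r : (B *m y) r 0 = (\sum_(v in enum_val r) (y v ord0 : nat))%:R.
  rewrite mxE natr_sum [RHS]big_mkcond; apply: eq_bigr => v _.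
  by rewrite mxE natr_Zp; case: (v \in _); rewrite ?mul1r ?mul0r.
apply/eqP/forall_inP => [By0 e eE | m_dvd].
  have := congr1 (fun M : 'cV['Z_m]_#|E| => M (enum_rank_in eE e) ord0) By0.
  by rewrite /= entry enum_rankK_in // mxE => /eqP; rewrite Zp_natr_eq0.
apply/matrixP => r j; rewrite ord1 entry mxE.
by apply/eqP; rewrite Zp_natr_eq0 m_dvd // enum_valP.
Qed.

Lemma incidence_const (c : 'Z_m) : uniform m E -> B *m (const_mx c : 'cV_n) = 0.
Proof.
move=> uE; apply/matrixP => r j; rewrite !mxE.
rewrite (eq_bigr (fun v => if v \in enum_val r then c else 0)) => [|v _]; last first.
  by rewrite !mxE; case: (v \in _); rewrite ?mul1r ?mul0r.
by rewrite -big_mkcond sumr_const (uE _ (enum_valP r)) -mulr_natr pchar_Zp ?mulr0.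
Qed.

Variables (F : fieldType) (w : F).
Hypothesis w_prim : m.-primitive_root w.

Lemma powvec_inj : injective (@powvec F m n w).
Proof.
move=> y y' yy'; apply/matrixP => i j; rewrite ord1; apply: val_inj => /=.
have /eqP := congr1 (fun d => d i) yy'.
by rewrite /powvec (eq_prim_root_expr w_prim) !modn_small // => /eqP.
Qed.

Lemma balanced_powvec (y : 'cV['Z_m]_n) :
  uniform m E -> B *m y == 0 -> balanced p.+1 E (powvec w y).
Proof.
move=> uE; rewrite incidence_mulmx_eq0 => /forall_inP By0 i f.
move e_def : (idxset (m := m) i f) => e eE; have card_e := uE _ eE.
have ie : i \in e by rewrite -e_def /idxset !inE eqxx.
have sum_f : (\sum_(j < p.+1) y (f j) ord0 = \sum_(v in e :\ i) y v ord0)%N.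
  exact: (big_idxset card_e addn (fun v => y v ord0 : nat) e_def).
rewrite /powvec prodrXr -exprM sum_f; apply/eqP.
rewrite (eq_prim_root_expr w_prim) -(eqn_modDr (y i ord0)) -mulnSr modnMl.
by rewrite addnC -(big_setD1 _ ie); apply: By0.
Qed.

Lemma balanced_unity (d : 'I_n -> F) (i0 : 'I_n) :
  uniform m E -> hconnected E -> d i0 = 1 -> balanced p.+1 E d ->
  forall v, d v ^+ m = 1.
Proof.
move=> uE hc di0 bd.
have closed_dm : closed (hadj E) [pred v | d v ^+ m == 1].
  move=> u v /existsP [e /and3P [eE ue ve]]; rewrite !inE.
  by rewrite -(balanced_edge_prod uE bd eE ue) -(balanced_edge_prod uE bd eE ve).
move=> v; have := closed_connect closed_dm (hc i0 v).
by rewrite !inE di0 expr1n eqxx => /esym/eqP.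
Qed.

Lemma balanced_powvecP (d : 'I_n -> F) (i0 : 'I_n) :
  uniform m E -> hconnected E -> d i0 = 1 -> balanced p.+1 E d ->
  exists2 y : 'cV['Z_m]_n, (B *m y == 0) && (y i0 ord0 == 0) & d = powvec w y.
Proof.
move=> uE hc di0 bd; have unity v : d v ^+ m = 1 by apply: balanced_unity uE hc di0 bd v.
have /all_sig [a da] := fun v => prim_rootP w_prim (unity v).
exists (\col_v (a v : 'Z_m)); last first.
  by apply: functional_extensionality => v; rewrite /powvec mxE.
apply/andP; split.
  rewrite incidence_mulmx_eq0; apply/forall_inP => e eE.
  have [u ue] : exists u, u \in e by apply/card_gt0P; rewrite (uE _ eE).
  rewrite (prim_order_dvd w_prim) -prodrXr (eq_bigr d) => [|v _]; last by rewrite mxE -da.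
  by rewrite (balanced_edge_prod uE bd eE ue) unity.
have : (m %| a i0)%N by rewrite (prim_order_dvd w_prim) -da di0.
by rewrite mxE /dvdn modn_small // => /eqP a0; apply/eqP/val_inj.
Qed.

End IncidenceKernel.

Lemma card_Zp_ann (p d : nat) : (0 < d)%N -> (d %| p.+2)%N ->
  #|[pred t : 'Z_p.+2 | d%:R * t == 0]| = d.
Proof.
move=> d_gt0 /dvdnP [q mE].
have q_gt0 : (0 < q)%N by case: q mE.
have annE (t : 'Z_p.+2) : (d%:R * t == 0) = (q %| t)%N.
  rewrite -[t in d%:R * t]natr_Zp -natrM Zp_natr_eq0.
  by rewrite [X in (X %| _)%N]mE (mulnC q d) dvdn_pmul2l.
have g_lt (j : 'I_d) : (j * q < p.+2)%N by rewrite mE mulnC ltn_pmul2l.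
pose g (j : 'I_d) : 'Z_p.+2 := Ordinal (g_lt j).
have g_inj : injective g.
  by move=> j l /(congr1 val) /eqP; rewrite /= eqn_pmul2r // => /eqP /val_inj.
rewrite -[RHS](card_ord d) -(card_imset _ g_inj); apply: eq_card => t.
rewrite inE annE; apply/idP/imsetP => [q_dvd | [j _ ->]]; last by rewrite dvdn_mull.
have t_lt : (t %/ q < d)%N by rewrite ltn_divLR // mulnC -mE.
by exists (Ordinal t_lt) => //; apply: val_inj; rewrite /= divnK.
Qed.

Lemma card_cV_family (R : finType) (n : nat) (F : 'I_n -> pred R) :
  #|[set z : 'cV[R]_n | [forall j, z j ord0 \in F j]]| = (\prod_(j < n) #|F j|)%N.
Proof.
pose col (z : 'cV[R]_n) := [ffun j => z j ord0].
have col_inj : injective col.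
  by move=> z z' /ffunP zz'; apply/matrixP => i j; rewrite ord1; move: (zz' i); rewrite !ffunE.
rewrite -(card_imset _ col_inj) (_ : col @: _ = [set g | g \in family F]).
  by rewrite cardsE card_family foldrE big_map big_enum.
apply/setP => g; rewrite !inE.
apply/imsetP/familyP => [[z] | Fg]; first by rewrite inE => /forallP Fz -> j; rewrite ffunE.
exists (\col_j g j); last by apply/ffunP => j; rewrite ffunE mxE.
by rewrite inE; apply/forallP => j; rewrite mxE.
Qed.

Section SmithKernel.

Variables (p q n : nat) (B : 'M['Z_p.+2]_(q, n)) (ds : seq nat).
Hypothesis smithB : smith_form_Zm B ds.
Local Notation m := p.+2.
Local Notation r := (size ds).

Lemma smith_size_le : (r <= q)%N /\ (r <= n)%N.
Proof. by have [] := smithB; rewrite leq_min => /andP. Qed.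

Lemma smith_kerP : exists2 Q : 'M['Z_m]_n, Q \in unitmx &
  forall y : 'cV['Z_m]_n, (B *m y == 0) =
    [forall j : 'I_n, (j < r)%N ==> ((nth 0%N ds j)%:R * (invmx Q *m y) j ord0 == 0)].
Proof.
have [[rq _] [_ [_ [_ [_ [P [Q [Pu [Qu PBQ]]]]]]]]] := (smith_size_le, smithB).
exists Q => // y; have -> : (B *m y == 0) = (P *m B *m Q *m (invmx Q *m y) == 0).
  rewrite -!mulmxA mulKVmx //; apply/eqP/eqP => [-> | ]; first by rewrite mulmx0.
  by move/(congr1 (mulmx (invmx P))); rewrite mulmx0 mulKmx.
move: (invmx Q *m y) => z.
have entry (i : 'I_q) : (P *m B *m Q *m z) i ord0 =
    \sum_(l : 'I_n | (val i == val l) && (i < r)%N) (nth 0%N ds i)%:R * z l ord0.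
  rewrite [LHS]mxE [RHS]big_mkcond; apply: eq_bigr => l _ /=.
  by rewrite PBQ; case: ifP; rewrite ?mul0r.
apply/eqP/forallP => [Dz j | Dz].
  apply/implyP => jr; have jq : (j < q)%N := leq_trans jr rq.
  have := congr1 (fun M : 'cV_q => M (Ordinal jq) ord0) Dz.
  rewrite /= entry mxE (bigD1 j) ?eqxx ?jr //= big1 ?addr0 => [-> // | l].
  by case/andP => /andP [/eqP jl _] lj; case/eqP: lj; apply: val_inj.
apply/matrixP => i c; rewrite ord1 entry mxE big1 // => l /andP [/eqP il ir].
by move: (Dz l); rewrite -il ir /= => /eqP.
Qed.

Lemma card_smith_ker :
  #|[set y : 'cV['Z_m]_n | B *m y == 0]| = (m ^ (n - r) * \prod_(d <- ds) d)%N.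
Proof.
have [_ rn] := smith_size_le.
have [_ [/allP ds_range [_ [/allP ds_dvd _]]]] := smithB.
have [Q Qu kerE] := smith_kerP.
pose F (j : 'I_n) := [pred t : 'Z_m | (j < r)%N ==> ((nth 0%N ds j)%:R * t == 0)].
have -> : #|[set y : 'cV['Z_m]_n | B *m y == 0]| =
          #|[set z : 'cV_n | [forall j, z j ord0 \in F j]]|.
  rewrite -[RHS](card_imset _ (can_inj (mulKmx Qu))); apply: eq_card => y.
  rewrite !inE kerE; apply/idP/imsetP => [Fy | [z]]; last first.
    by rewrite inE => Fz ->; rewrite mulKmx.
  by exists (invmx Q *m y); rewrite ?mulKVmx // inE.
rewrite card_cV_family.
transitivity (\prod_(j < n) (if (j < r)%N then nth 0%N ds j else m))%N.
  apply: eq_bigr => j _; case: ifP => jr; last first.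
    by rewrite -[RHS]card_ord; apply: eq_card => t; rewrite !inE jr.
  have dj : nth 0%N ds j \in ds by rewrite mem_nth.
  have /andP [dj_gt0 _] := ds_range _ dj.
  by rewrite -(card_Zp_ann dj_gt0 (ds_dvd _ dj)); apply: eq_card => t; rewrite !inE jr.
rewrite -(big_mkord predT (fun j => if (j < r)%N then nth 0%N ds j else m)).
rewrite (big_cat_nat (leq0n r) rn) /= mulnC; congr (_ * _)%N.
  rewrite -prod_nat_const_nat big_nat_cond [RHS]big_nat_cond; apply: eq_bigr => j.
  by rewrite andbT => /andP [/leq_gtF -> _].
rewrite [RHS](big_nth 0%N) big_nat_cond [RHS]big_nat_cond; apply: eq_bigr => j.
by rewrite andbT => /andP [_ ->].
Qed.

Lemma smith_size_lt : (0 < n)%N -> B *m (const_mx 1 : 'cV_n) = 0 -> (r < n)%N.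
Proof.
(* If r = n, the last invariant factor L kills the kernel, in particular the
   constant vector 1, so m divides L < m. *)
move=> n_gt0 B1; have [_ rn] := smith_size_le.
rewrite ltn_neqAle rn andbT; apply/eqP => rn_eq.
have [_ [/allP ds_range [ds_sorted _]]] := smithB.
have [Q Qu kerE] := smith_kerP.
have := kerE (const_mx 1); rewrite B1 eqxx => /esym/forallP Dz.
pose L := nth 0%N ds r.-1.
have L_in : L \in ds by rewrite mem_nth // prednK // rn_eq.
have dL (j : 'I_n) : (nth 0%N ds j %| L)%N.
  apply: (sorted_leq_nth dvdn_trans dvdnn 0%N ds_sorted); rewrite ?inE ?prednK ?rn_eq //.
  by rewrite -ltnS prednK // -rn_eq.
have Lz : (L%:R : 'Z_m) *: (invmx Q *m (const_mx 1 : 'cV_n)) = 0.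
  apply/matrixP => j c; rewrite ord1 [LHS]mxE [RHS]mxE.
  have /eqP dz := implyP (Dz j) (etrans (congr1 _ rn_eq) (ltn_ord j)).
  by rewrite -(divnK (dL j)) natrM -mulrA dz mulr0.
have : (L%:R : 'Z_m) *: (const_mx 1 : 'cV_n) = 0.
  by rewrite -(mulKVmx Qu (const_mx 1)) scalemxAr Lz mulmx0.
move/matrixP/(_ (Ordinal n_gt0) ord0); rewrite !mxE mulr1 => /eqP.
have /andP [L_gt0 L_lt] := ds_range _ L_in.
by rewrite Zp_natr_eq0 => /(dvdn_leq L_gt0); rewrite leqNgt (leq_ltn_trans L_lt).
Qed.

End SmithKernel.

Lemma card_ker_const_shift (p q n : nat) (B : 'M['Z_p.+2]_(q, n.+1)) :
  (forall c, B *m (const_mx c : 'cV_n.+1) = 0) ->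
  #|[set y : 'cV['Z_p.+2]_n.+1 | B *m y == 0]| =
  (#|[set y : 'cV['Z_p.+2]_n.+1 | (B *m y == 0%R) && (y ord0 ord0 == 0%R)]| * p.+2)%N.
Proof.
move=> B_const; pose S := [set y : 'cV['Z_p.+2]_n.+1 | (B *m y == 0) && (y ord0 ord0 == 0)].
pose h (yc : 'cV['Z_p.+2]_n.+1 * 'Z_p.+2) := yc.1 + const_mx yc.2.
have h_inj : {in setX S setT &, injective h}.
  move=> [y c] [y' c'] /setXP [+ _] /setXP [+ _]; rewrite !inE /h /=.
  move=> /andP [_ /eqP y0] /andP [_ /eqP y0'] yy'.
  have cc' : c = c'.
    by have := congr1 (fun M : 'cV_n.+1 => M ord0 ord0) yy'; rewrite /= !mxE y0 y0' !add0r.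
  by move: yy'; rewrite cc' => /addIr ->.
have cardSX : #|setX S [set: 'Z_p.+2]| = (#|S| * p.+2)%N by rewrite cardsX cardsT card_ord.
rewrite -cardSX -(card_in_imset h_inj); apply: eq_card => y; rewrite inE.
apply/idP/imsetP => [By0 | [[z c] /setXP [zS _] ->]]; last first.
  by move: zS; rewrite inE /h /= mulmxDr B_const addr0 => /andP [].
exists (y - const_mx (y ord0 ord0), y ord0 ord0); last by rewrite /h /= subrK.
by rewrite !inE mulmxBr B_const subr0 By0 !mxE subrr.
Qed.

Definition incidence_ker0 (p n : nat) (E : {set {set 'I_n.+1}}) :
    {set 'cV['Z_p.+2]_n.+1} :=
  [set y | (incidence p.+2 E *m y == 0) && (y ord0 ord0 == 0)].

Lemma card_incidence_ker0 (p n : nat) (E : {set {set 'I_n.+1}}) (ds : seq nat) :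
  uniform p.+2 E -> smith_form_Zm (incidence p.+2 E) ds ->
  #|incidence_ker0 p E| = (p.+2 ^ (n - size ds) * \prod_(d <- ds) d)%N.
Proof.
move=> uE smithB; have r_lt := smith_size_lt smithB (ltn0Sn n) (incidence_const 1 uE).
apply/eqP; rewrite -(eqn_pmul2r (ltn0Sn p.+1)) -card_ker_const_shift => [|c]; last first.
  exact: incidence_const.
by rewrite (card_smith_ker smithB) subSn // expnS -mulnA mulnC.
Qed.

Lemma stabilizes_adjT_powvec (C : numClosedFieldType) (p n : nat)
    (E : {set {set 'I_n.+1}}) (w : C) (d : 'I_n.+1 -> C) :
  uniform p.+2 E -> hconnected E -> p.+2.-primitive_root w ->
  stabilizes (@adjT C n.+1 p.+2 E) d <->
  exists2 y, y \in incidence_ker0 p E & d = powvec w y.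
Proof.
move=> uE hc w_prim; split=> [/stabilizes_adjT [_ d1 bd] | [y]].
  by have [y] := balanced_powvecP w_prim uE hc (d1 ord0 erefl) bd; exists y; rewrite ?inE.
rewrite inE => /andP [By y0] ->.
apply/stabilizes_adjT; split=> [i | i i_0 | ]; last exact: balanced_powvec.
  by rewrite /powvec expf_neq0 // (prim_root_eq0 w_prim).
by rewrite (_ : i = ord0) ?/powvec ?(eqP y0) //; apply: val_inj.
Qed.

Lemma set_card_image (T : finType) (U : Type) (n : nat) (S : {set T})
    (g : T -> 'I_n -> U) (P : ('I_n -> U) -> Prop) :
  injective g -> (forall d, P d <-> exists2 y, y \in S & d = g y) -> set_card P #|S|.
Proof.
move=> g_inj PS; exists (fun k => g (enum_val k)); split; [|split].
- by move=> k l /g_inj /enum_val_inj.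
- by move=> k; apply/PS; exists (enum_val k) => //; apply: enum_valP.
- by move=> d /PS [y yS ->]; exists (enum_rank_in yS y); rewrite enum_rankK_in.
Qed.

Lemma proj_card_normalized (C : numClosedFieldType) (n N : nat)
    (V W : ('I_n -> C) -> Prop) (i0 : 'I_n) :
  set_card W N -> (forall d, W d -> V d /\ d i0 = 1) ->
  (forall x, V x -> x i0 != 0 /\ W (fun i => (x i0)^-1 * x i)) ->
  proj_card V N.
Proof.
move=> [X [X_inj [XW W_X]]] WV VW; exists X; split; [|split].
- by move=> k; have [] := WV _ (XW k).
- move=> k l [c [_ Xkl]]; apply: X_inj; apply: functional_extensionality => i.
  have [_ Xk1] := WV _ (XW k); have [_ Xl1] := WV _ (XW l).
  have c1 : c = 1 by move: (Xkl i0); rewrite Xk1 Xl1 mulr1.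
  by rewrite Xkl c1 mul1r.
- move=> x /VW [x0 /W_X [k xk]]; exists k, (x i0); split=> // i.
  by rewrite -xk mulVKf.
Qed.

Theorem theorem3p5 (R : realType) (n m : nat) (E : {set {set 'I_n}})
  (ds : seq nat) :
  (2 <= m)%N -> (0 < n)%N ->
  @uniform n m E -> hconnected E ->
  smith_form_Zm (@incidence n m E) ds ->
  let N := (m ^ (n.-1 - size ds) * \prod_(d <- ds) d)%N in
  proj_card (eigcone (@lapT R[i] n m E) 0) N /\
  stab_index_is (@lapT R[i] n m E) N /\
  stab_index_is (@adjT R[i] n m E) N.
Proof.
case: m => [|[|p]] // _; case: n E => [//|n] E _ uE hc smithB N.
have [w w_prim] : exists w : R[i], p.+2.-primitive_root w.
  by apply: prim_root_exists; rewrite // pnatr_eq0.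
have stabE := stabilizes_adjT_powvec _ uE hc w_prim.
have cardS := card_incidence_ker0 uE smithB.
have stab_adj : stab_index_is (@adjT R[i] n.+1 p.+2 E) N.
  by rewrite /stab_index_is /N -cardS; apply: set_card_image (powvec_inj w_prim) stabE.
split; [|split] => //.
  apply: (proj_card_normalized (i0 := ord0) stab_adj) => [d | x].
    exact: stabilizes_adjT_eigcone.
  exact: eigcone_normalize.
rewrite /stab_index_is /N -cardS; apply: set_card_image (powvec_inj w_prim) _ => d.
exact: iff_trans (stabilizes_lapT _ _ d) (stabE d).
Qed.
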